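(* Let $T$ be a tree on $n\ge7$ vertices such that every leaf $v$ of $T$ satisfies both $|N_2(v)|>\lceil n/2\rceil-4$ and $|N_{\ge4}(v)|<|N_2(v)|+4-\lceil n/2\rceil$. Then $T$ has diameter at most $3$.
   Context: For a vertex $v$ of a tree, $N_i(v)$ is the set of vertices at distance exactly $i$ from $v$ and $N_{\ge i}(v)$ the set of vertices at distance at least $i$ from $v$. The diameter of $T$ is the maximum distance between two of its vertices. *)

From mathcomp Require Import all_boot.
Set Implicit Arguments. Unset Strict Implicit. Unset Printing Implicit Defensive.

Definition simple_graph (T : finType) (e : rel T) : Prop :=
  symmetric e /\ irreflexive e.

Fixpoint ball (T : finType) (e : rel T) (v : T) (k : nat) : {set T} :=
  match k with
  | 0 => [set v]
  | k'.+1 => ball e v k' :|: [set y | [exists z in ball e v k', e z y]]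
  end.

Definition connected_graph (T : finType) (e : rel T) : Prop :=
  forall x y : T, exists k, y \in ball e x k.

Definition n_edges (T : finType) (e : rel T) : nat :=
  #|[set p : T * T | e p.1 p.2]| %/ 2.

Definition is_tree (T : finType) (e : rel T) : Prop :=
  simple_graph e /\ connected_graph e /\ 0 < #|T| /\ n_edges e = #|T| - 1.

Definition degree (T : finType) (e : rel T) (v : T) : nat := #|[set y | e v y]|.
Definition is_leaf (T : finType) (e : rel T) (v : T) : Prop := degree e v = 1.

Definition N_eq (T : finType) (e : rel T) (v : T) (i : nat) : {set T} :=
  match i with
  | 0 => [set v]
  | i'.+1 => ball e v i :\: ball e v i'
  end.

Definition N_ge (T : finType) (e : rel T) (v : T) (i : nat) : {set T} :=
  match i with
  | 0 => [set: T]
  | i'.+1 => ~: ball e v i'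
  end.

Definition diam_le (T : finType) (e : rel T) (d : nat) : Prop :=
  forall x y : T, y \in ball e x d.

From mathcomp Require Import all_boot all_order all_algebra.
From mathcomp Require Import zify.
Set Implicit Arguments. Unset Strict Implicit. Unset Printing Implicit Defensive.

(* Suppose the diameter is at least 4 and let x, y realise it.  Counting the
   2(n-1) arcs of the tree shows that, seen from x, every vertex but x has a
   unique neighbour closer to x and no edge joins two vertices at the same
   distance from x.  Hence x and y are leaves, and every vertex at distance 2
   from y, except the grandparent of y, lies as far from x as y does; so
   |N_2(y)| <= |N_{>=4}(x)| and symmetrically |N_2(x)| <= |N_{>=4}(y)|.
   Adding the second hypothesis at x and at y then gives 2 ceil(n/2) < 8,
   contradicting n >= 7. *)

Section Distance.
Variables (T : finType) (e : rel T).
Hypothesis conn : connected_graph e.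

Lemma ball_mono v k m : k <= m -> ball e v k \subset ball e v m.
Proof.
elim: m => [|m IHm]; first by rewrite leqn0 => /eqP->.
rewrite leq_eqVlt => /orP[/eqP->//|]; rewrite ltnS => /IHm.
by move/subset_trans; apply; apply/subsetP => y /= yv; rewrite in_setU yv.
Qed.

Definition dist x y : nat := ex_minn (conn x y).

Lemma ball_dist x y k : (y \in ball e x k) = (dist x y <= k).
Proof.
rewrite /dist; case: ex_minnP => m xm m_min.
by apply/idP/idP => [/m_min //|]; move/(ball_mono x)/subsetP; apply.
Qed.

Lemma distxx x : dist x x = 0.
Proof. by apply/eqP; rewrite -leqn0 -ball_dist /= in_set1. Qed.

Lemma dist_eq0 x y : dist x y = 0 -> y = x.
Proof. by move=> d0; apply/set1P; rewrite -[[set x]]/(ball e x 0) ball_dist d0. Qed.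

Lemma dist_edge x z y : e z y -> dist x y <= (dist x z).+1.
Proof.
move=> ezy; rewrite -ball_dist /= in_setU in_set; apply/orP; right.
by apply/existsP; exists z; rewrite ball_dist leqnn ezy.
Qed.

Lemma dist_predP x y k :
  dist x y = k.+1 -> exists2 z, e z y & dist x z = k.
Proof.
move=> dxy; have : y \in ball e x k.+1 by rewrite ball_dist dxy.
rewrite /= in_setU in_set ball_dist dxy ltnn /= => /existsP[z /andP[zk ezy]].
exists z => //; rewrite ball_dist in zk.
by apply/eqP; rewrite eqn_leq zk -ltnS -dxy dist_edge.
Qed.

Lemma dist_triangle x y z : dist x z <= dist x y + dist y z.
Proof.
move dyz: (dist y z) => k.
elim: k z dyz => [|k IHk] z dyz; first by rewrite (dist_eq0 dyz) addn0.
have [w ewz dyw] := dist_predP dyz.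
by apply: leq_trans (dist_edge x ewz) _; rewrite addnS ltnS IHk.
Qed.

Lemma mem_N_eq2 v w : (w \in N_eq e v 2) = (dist v w == 2).
Proof. by rewrite in_setD !ball_dist; lia. Qed.

Lemma mem_N_ge4 v w : (w \in N_ge e v 4) = (4 <= dist v w).
Proof. by rewrite in_setC ball_dist; lia. Qed.

Hypothesis esym : symmetric e.

Lemma distC x y : dist x y = dist y x.
Proof.
suff dist_le x' y' : dist y' x' <= dist x' y'.
  by apply/eqP; rewrite eqn_leq !dist_le.
move dxy: (dist x' y') => k.
elim: k y' dxy => [|k IHk] y' dxy; first by rewrite (dist_eq0 dxy) distxx.
have [z ezy dxz] := dist_predP dxy.
apply: leq_trans (dist_triangle y' z x') _; rewrite -add1n leq_add ?IHk //.
by rewrite esym in ezy; have := dist_edge y' ezy; rewrite distxx.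
Qed.

End Distance.

Section RootedTree.
Variables (T : finType) (e : rel T).
Hypotheses (esym : symmetric e) (eirr : irreflexive e).
Hypothesis conn : connected_graph e.
Hypothesis card_arcs : #|[set a : T * T | e a.1 a.2]| < 2 * #|T|.
Variable x : T.

Local Notation dist := (dist conn).

Definition parent u := odflt u [pick w | e u w && (dist x w < dist x u)].

Lemma parentP u : u != x -> e u (parent u) && (dist x (parent u) < dist x u).
Proof.
move=> ux; rewrite /parent; case: pickP => [w //| no_parent].
case du: (dist x u) => [|k]; first by rewrite (dist_eq0 du) eqxx in ux.
have [w ewu dw] := dist_predP du.
by have := no_parent w; rewrite esym ewu dw du ltnSn.
Qed.

Definition parent_arcs := [set (v, parent v) | v in [set~ x]].

Lemma mem_parent_arcs v w :
  ((v, w) \in parent_arcs) = (v != x) && (w == parent v).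
Proof.
apply/imsetP/andP => [[v' /[!in_setC1] v'x [-> ->]] | [vx /eqP->]] //.
by exists v; rewrite ?in_setC1.
Qed.

Lemma card_parent_arcs : #|parent_arcs| = #|T| - 1.
Proof. by rewrite card_imset ?cardsC1 ?subn1 // => ? ? []. Qed.

Lemma edge_parent u w :
  e u w -> (u != x) && (w == parent u) || (w != x) && (u == parent w).
Proof.
move=> euw; pose up := parent_arcs; set down := [set swap_pair a | a in up].
have up_arc a : a \in up -> e a.1 a.2 && (dist x a.2 < dist x a.1).
  by case: a => v w' /[!mem_parent_arcs] /andP[vx /eqP->]; apply: parentP.
have down_arc a : a \in down -> e a.1 a.2 && (dist x a.1 < dist x a.2).
  by case/imsetP=> -[b1 b2] /up_arc /= /andP[eb lt] ->; rewrite /= esym eb.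
have swap_inj : injective (@swap_pair T T) by apply: can_inj swap_pairK.
have mem_down v1 v2 : ((v1, v2) \in down) = ((v2, v1) \in up).
  exact: (mem_imset _ (v2, v1) swap_inj).
have updown : [disjoint up & down].
  apply/pred0P => a /=; apply/negP => /andP[/up_arc/andP[_ lt] /down_arc/andP[_ gt]].
  by move: lt gt; lia.
apply: contraTT card_arcs; rewrite -leqNgt => not_tree.
have uw : u != w by apply: contraTneq euw => ->; rewrite eirr.
(* the arcs (u, w) and (w, u) lie outside [up :|: down], which has 2 (n - 1) elements *)
have out : [disjoint [set (u, w); (w, u)] & up :|: down].
  apply/pred0P => a /=; apply/negP; case/andP => /set2P[]-> /setUP[];
  by rewrite ?mem_down mem_parent_arcs; move: not_tree; case: andP; case: andP.
have : #|[set (u, w); (w, u)] :|: (up :|: down)| <= #|[set a : T * T | e a.1 a.2]|.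
  apply/subset_leq_card/subsetP => a; rewrite !in_setU !in_set1 in_set.
  by case/orP => [/orP[]/eqP->|/orP[/up_arc|/down_arc]/andP[]] //=; rewrite esym.
rewrite cardsU (disjoint_setI0 out) cards0 subn0.
rewrite (cardsU up) (disjoint_setI0 updown) cards0 subn0 cards2 xpair_eqE negb_and uw.
rewrite (card_imset _ swap_inj) card_parent_arcs.
have : 0 < #|T| by apply/card_gt0P; exists x.
lia.
Qed.

Lemma dist_edge_neq u w : e u w -> dist x u != dist x w.
Proof.
case/edge_parent/orP => /andP[/parentP/andP[_ lt] /eqP->]; first by rewrite gtn_eqF.
by rewrite ltn_eqF.
Qed.

Lemma closer_neighbour_parent u w : e u w -> dist x w < dist x u -> w = parent u.
Proof.
case/edge_parent/orP => /andP[wx /eqP->] // lt.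
by case/andP: (parentP wx) => _ /(ltn_trans lt); rewrite ltnn.
Qed.

Section Farthest.
Variable y : T.
Hypotheses (y_far : forall w, dist x w <= dist x y) (yx : y != x).

Lemma farthest_neighbour z : e y z -> z = parent y.
Proof.
move=> eyz; apply: closer_neighbour_parent => //.
by rewrite ltn_neqAle eq_sym dist_edge_neq ?y_far.
Qed.

Lemma farthest_leaf : is_leaf e y.
Proof.
rewrite /is_leaf /degree (_ : [set z | e y z] = [set parent y]) ?cards1 //.
apply/setP => z; rewrite in_set in_set1; apply/idP/eqP => [/farthest_neighbour //|->].
by case/andP: (parentP yx).
Qed.

Lemma card_N_eq2_farthest : 4 <= dist x y -> #|N_eq e y 2| <= #|N_ge e x 4|.
Proof.
move=> far4; set u := parent y; set p := parent u.
have du : dist x y <= (dist x u).+1.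
  by rewrite dist_edge // esym; case/andP: (parentP yx).
(* apart from p, the vertices at distance 2 from y are the other children of u *)
have sub : N_eq e y 2 :\ p \subset N_ge e x 4 :\ y.
  apply/subsetP => w; rewrite !in_setD1 mem_N_eq2 mem_N_ge4 => /andP[wp /eqP dw].
  have [z ezw dz] := dist_predP dw; have [y' ey'z /dist_eq0 y'y] := dist_predP dz.
  rewrite y'y in ey'z; have zu := farthest_neighbour ey'z; rewrite zu in ezw.
  have wy : w != y by apply/eqP => wy; rewrite wy distxx in dw.
  rewrite wy /=; apply: leq_trans far4 (leq_trans du _).
  rewrite ltn_neqAle dist_edge_neq //=; case: leqP => // ltw.
  by rewrite (closer_neighbour_parent ezw ltw) eqxx in wp.
have := subset_leq_card sub.
rewrite (cardsD1 p (N_eq e y 2)) (cardsD1 y (N_ge e x 4)) mem_N_ge4 far4.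
by case: (p \in _); lia.
Qed.

End Farthest.
End RootedTree.

Lemma card_arcs_tree (T : finType) (e : rel T) :
  is_tree e -> #|[set a : T * T | e a.1 a.2]| < 2 * #|T|.
Proof.
case=> _ [_ [n_gt0 n_edges_tree]]; rewrite mulnC -ltn_divLR //.
by move: n_edges_tree; rewrite /n_edges; lia.
Qed.

Local Open Scope ring_scope.

Theorem mainTheorem15 (T : finType) (e : rel T) :
  is_tree e -> (7 <= #|T|)%N ->
  (forall v : T, is_leaf e v ->
     ((#|N_eq e v 2|)%:Z > (uphalf #|T|)%:Z - 4) /\
     ((#|N_ge e v 4|)%:Z < (#|N_eq e v 2|)%:Z + 4 - (uphalf #|T|)%:Z)) ->
  diam_le e 3.
Proof.
move=> tree n_ge7 leaf_cond; have card_arcs := card_arcs_tree tree.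
have [[esym eirr] [conn _]] := tree.
have /card_gt0P[v0 _] : (0 < #|T|)%N by lia.
have [[x y] _ diam] := @arg_maxnP _ (v0, v0) xpredT (fun a => dist conn a.1 a.2) isT.
rewrite /= in diam.
have far_y w : (dist conn x w <= dist conn x y)%N by apply: (diam (x, w)).
have far_x w : (dist conn y w <= dist conn y x)%N.
  by rewrite (distC conn esym y x); apply: (diam (y, w)).
suff : ~~ (4 <= dist conn x y)%N.
  by rewrite -ltnNge ltnS => small u v; rewrite ball_dist (leq_trans (diam (u, v) isT)).
apply/negP => far4; have far4' := far4; rewrite distC // in far4'.
have yx : y != x by apply: contraTneq far4 => ->; rewrite distxx.
have xy : x != y by rewrite eq_sym.
have [_ leaf_x] := leaf_cond x (farthest_leaf esym eirr card_arcs far_x xy).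
have [_ leaf_y] := leaf_cond y (farthest_leaf esym eirr card_arcs far_y yx).
have := card_N_eq2_farthest esym eirr card_arcs far_y yx far4.
have := card_N_eq2_farthest esym eirr card_arcs far_x xy far4'.
have : (4 <= uphalf #|T|)%N by rewrite geq_uphalf_double.
move: leaf_x leaf_y; lia.
Qed.
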